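(* Consider the algorithm described in the context, where $\psi$ can be truncated, and assume that the iterates are bounded (there is $R>0$ with $\{x^k\}\subseteq B_R(0)$). Let $\tilde x^k$ denote the point before the truncation step of iteration $k$ and $x^{k+1}$ the point after it. Then $$\sum_{k=0}^\infty\|x^{k+1}-\tilde x^k\|\le m\kappa\sum_{i=0}^\infty\epsilon_i<\infty\quad\text{and}\quad\sum_{k=0}^\infty|\psi(x^{k+1})-\psi(\tilde x^k)|<\infty.$$
   Context: Problem: minimize $\psi=f+\varphi$ where $f:\mathbb{R}^n\to\mathbb{R}$ is continuously differentiable and $\varphi:\mathbb{R}^n\to\mathbb{R}$ is convex. Notation: $\|\cdot\|$ Euclidean norm, $B_r(x)$ open ball, $\bar v=v/\|v\|$, $\psi'(x;d)$ directional derivative, $\partial\psi(x)=\nabla f(x)+\partial\varphi(x)$; $x$ is stationary if $0\in\partial\psi(x)$. Pseudo-gradient: $g(x)=u(x)d(x)$ where, for non-stationary $x$, $\|d(x)\|=1$, $\psi'(x;d(x))<0$, $u(x)\in[\psi'(x;d(x)),0)$, and for stationary $x$, $d(x)=0$, $u(x)=0$. Safeguards: for $\|d\|=1$, $\Gamma_{\max}(x,d)=\sup\{T>0: t\mapsto\psi(x+td)\text{ is } C^1\text{ on }(0,T)\}$, $\Gamma(x)=\inf_{\|d\|=1}\Gamma_{\max}(x,d)$; a stepsize safeguard $(x,d)\mapsto\Gamma(x,d)\in(0,\infty]$ is fixed. Truncation: $\psi$ can be truncated with data $\mathbb{R}^n=S_0\supset\cdots\supset S_m$, $\delta\in(0,\infty]$,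 $\kappa>0$, $T:\mathbb{R}^n\times(0,\delta]\to\mathbb{R}^n$ meaning (i) $\Gamma(x)\ge\delta$ on $S_m$; (ii) for $a\in(0,\delta]$, $x\in S_i\setminus S_{i+1}$, $i<m$: if $\Gamma(x)\ge a$ then $T(x,a)=x$, else $T(x,a)\in S_{i+1}$, $\Gamma(T(x,a))\ge a$, $\|T(x,a)-x\|\le\kappa a$. Put $S_{m+1}=\emptyset$. Algorithm: parameters $0<\eta<\eta_1<\eta_2<1$, $0<r_1<1<r_2$, $\Delta_{\max}>0$, $\gamma_1,\gamma_2>0$, a positive strictly decreasing summable sequence $(\epsilon_s)$ with $\epsilon_s\le\delta$, a nonincreasing $\ell:(0,\infty)\to[0,\frac12]$ with $\ell(\Delta)\to0$ as $\Delta\to0^+$; start $x^0$, $\Delta_0>0$, counters $c_0=\dots=c_m=0$. Iteration $k$: $g^k=g(x^k)$; stop if $g^k=0$. Choose $B^k\in\mathbb{R}^{n\times n}$, model $m_k(s)=\psi(x^k)+\langle g^k,s\rangle+\frac12\langle s,B^ks\rangle$, Cauchy point $s^k_C=-\alpha^C_kg^k$ with $\alpha^C_k\in\arg\min_{0\le t\le\Delta_k/\|g^k\|}m_k(-tg^k)$. Choose $s^k$, $\|s^k\|\le\Delta_k$, with $m_k(0)-m_k(s^k)\ge\frac{\gamma_1}{2}\|g^k\|\min\{\Delta_k,\gamma_2\|g^k\|\}$ and $m_k(0)-m_k(s^k)\ge(1-\ell(\|s^k\|))(m_k(0)-m_k(s^k_C))$. Let $\rho^1_k=\frac{\psi(x^k)-\psi(x^k+s^k)}{m_k(0)-m_k(s^k)}$.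 If $\rho^1_k\ge\eta_1$: $\tilde x^k=x^k+s^k$, $\Delta_{k+1}=\min\{\Delta_{\max},r_2\Delta_k\}$ if $\rho^1_k>\eta_2$ and $\Delta_{k+1}=\Delta_k$ otherwise. Otherwise: $\alpha_k=\min\{\Gamma(x^k,\bar s^k),\|s^k\|\}$; if $m_k(0)-m_k(\alpha_k\bar s^k)<\frac{\alpha_k}{2\|s^k\|}(m_k(0)-m_k(s^k))$, replace $s^k$ by $s^k_C$ and $\alpha_k=\min\{\Gamma(x^k,\bar s^k_C),\|s^k_C\|\}$; $\rho^2_k=\frac{\psi(x^k)-\psi(x^k+\alpha_k\bar s^k)}{m_k(0)-m_k(\alpha_k\bar s^k)}$; $\Delta_{k+1}=r_1\Delta_k$ if $\rho^2_k<\eta_1$, $=\min\{\Delta_{\max},r_2\Delta_k\}$ if $\rho^2_k>\eta_2$, $=\Delta_k$ otherwise; $\tilde x^k=x^k+\alpha_k\bar s^k$ if $\rho^2_k\ge\eta$ and $\tilde x^k=x^k$ otherwise. Truncation step: set $\tilde x=\tilde x^k$ and repeat {find $i$ with $\tilde x\in S_i\setminus S_{i+1}$; if $\Gamma(\tilde x)<\epsilon_{c_i}$ set $\tilde x\leftarrow T(\tilde x,\epsilon_{c_i})$, $c_i\leftarrow c_i+1$; else stop}; $x^{k+1}=\tilde x$. *)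

From HB Require Import structures.
From mathcomp Require Import all_boot all_order all_algebra.
From mathcomp Require Import all_classical all_reals all_analysis.
Set Implicit Arguments. Unset Strict Implicit. Unset Printing Implicit Defensive.
Import Order.TTheory GRing.Theory Num.Theory.
Import numFieldNormedType.Exports.
Local Open Scope classical_set_scope.
Local Open Scope ring_scope.

Section Defs.
Variables (R : realType) (n : nat).
Notation vec := 'rV[R]_n.

Definition dot (u v : vec) : R := \sum_(i < n) u ord0 i * v ord0 i.
Definition enorm (v : vec) : R := Num.sqrt (dot v v).
Definition nrm (v : vec) : vec := (enorm v)^-1 *: v.
Definition qform (B : 'M[R]_n) (s : vec) : R :=
  \sum_(i < n) \sum_(j < n) s ord0 i * B i j * s ord0 j.

Definition has_gradient (f : vec -> R) (gradf : vec -> vec) : Prop :=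
  forall x : vec,
    (fun h : vec => (f (x + h) - f x - dot (gradf x) h) / enorm h) @ (0 : vec)^' --> (0 : R).

Definition convex_fun (phi : vec -> R) : Prop :=
  forall (x y : vec) (t : R), 0 <= t <= 1 ->
    phi (t *: x + (1 - t) *: y) <= t * phi x + (1 - t) * phi y.

Definition subdiff (phi : vec -> R) (x : vec) : set vec :=
  [set v | forall y : vec, phi x + dot v (y - x) <= phi y].

Definition stationary (gradf : vec -> vec) (phi : vec -> R) (x : vec) : Prop :=
  exists2 v, subdiff phi x v & gradf x + v = 0.

Definition dirder (psi : vec -> R) (x d : vec) : R :=
  lim ((fun t : R => (psi (x + t *: d) - psi x) / t) @ 0^'+).

Definition pseudo_gradient (gradf : vec -> vec) (phi : vec -> R)
    (psi : vec -> R) (u : vec -> R) (d : vec -> vec) : Prop :=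
  forall x : vec,
    (~ stationary gradf phi x ->
       enorm (d x) = 1 /\ dirder psi x (d x) < 0 /\
       dirder psi x (d x) <= u x /\ u x < 0) /\
    (stationary gradf phi x -> d x = 0 /\ u x = 0).

Definition pgrad (u : vec -> R) (d : vec -> vec) (x : vec) : vec := u x *: d x.

Definition C1_on (h : R -> R) (a b : R) : Prop :=
  (forall t, a < t < b -> derivable h t 1) /\
  {within `]a, b[, continuous (derive1 h)}.

Definition Gamma_max (psi : vec -> R) (x d : vec) : \bar R :=
  ereal_sup [set T%:E | T in [set T : R | 0 < T /\
               C1_on (fun t => psi (x + t *: d)) 0 T]].

Definition Gamma (psi : vec -> R) (x : vec) : \bar R :=
  ereal_inf [set Gamma_max psi x d | d in [set d : vec | enorm d = 1]].

Definition layerS (S : nat -> set vec) (m i : nat) : set vec :=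
  if (i <= m)%N then S i else set0.

Definition in_layer (S : nat -> set vec) (m i : nat) (x : vec) : Prop :=
  (i <= m)%N /\ layerS S m i x /\ ~ layerS S m i.+1 x.

Definition truncatable (psi : vec -> R) (m : nat) (S : nat -> set vec)
    (delta : \bar R) (kappa : R) (T : vec -> R -> vec) : Prop :=
  [/\ S 0%N = setT,
      (forall i, (i < m)%N -> S i.+1 `<=` S i),
      (0 < delta)%E /\ 0 < kappa,
      (forall x, S m x -> (delta <= Gamma psi x)%E) &
      (forall (a : R) (i : nat) (x : vec), 0 < a -> (a%:E <= delta)%E ->
         (i < m)%N -> S i x -> ~ S i.+1 x ->
         ((a%:E <= Gamma psi x)%E -> T x a = x) /\
         ((Gamma psi x < a%:E)%E ->
            [/\ S i.+1 (T x a), (a%:E <= Gamma psi (T x a))%E &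
                enorm (T x a - x) <= kappa * a]))].

Definition incr (c : nat -> nat) (i : nat) : nat -> nat :=
  fun j => if j == i then (c j).+1 else c j.

(* The truncation loop: trunc_loop x c x' c' means that starting from
   tilde x = x with counters c, the loop ends at x' with counters c'. *)
Inductive trunc_loop (psi : vec -> R) (m : nat) (S : nat -> set vec)
    (T : vec -> R -> vec) (eps : nat -> R) :
    vec -> (nat -> nat) -> vec -> (nat -> nat) -> Prop :=
| TL_stop x c i :
    in_layer S m i x -> ~ (Gamma psi x < (eps (c i))%:E)%E ->
    trunc_loop psi m S T eps x c x c
| TL_step x c i x' c' :
    in_layer S m i x -> (Gamma psi x < (eps (c i))%:E)%E ->
    trunc_loop psi m S T eps (T x (eps (c i))) (incr c i) x' c' ->
    trunc_loop psi m S T eps x c x' c'.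

Definition eminr (a : \bar R) (b : R) : R := fine (Order.min a b%:E).

(* One iteration k of the algorithm:
   state (x, Delta, c) |-> (tilde x, x', Delta', c').
   If g(x) = 0 the algorithm stops; we then pad with constant iterates. *)
Definition alg_step (psi : vec -> R) (u : vec -> R) (d : vec -> vec)
    (Gs : vec -> vec -> \bar R) (m : nat) (S : nat -> set vec)
    (T : vec -> R -> vec) (eps : nat -> R) (ell : R -> R)
    (eta eta1 eta2 r1 r2 Dmax gam1 gam2 : R)
    (x : vec) (D : R) (c : nat -> nat)
    (xt x' : vec) (D' : R) (c' : nat -> nat) : Prop :=
  let g := pgrad u d x in
  if g == 0 then [/\ xt = x, x' = x, D' = D & c' = c] else
  exists (B : 'M[R]_n) (aC : R) (s : vec),
    let mk := fun s : vec => psi x + dot g s + 2^-1 * qform B s in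
    let sC := (- aC) *: g in
    [/\
        0 <= aC <= D / enorm g /\
        (forall t, 0 <= t <= D / enorm g -> mk (- aC *: g) <= mk (- t *: g)),
        enorm s <= D /\
        mk 0 - mk s >= gam1 / 2 * enorm g * Order.min D (gam2 * enorm g) /\
        mk 0 - mk s >= (1 - ell (enorm s)) * (mk 0 - mk sC),
        (let rho1 := (psi x - psi (x + s)) / (mk 0 - mk s) in
         if eta1 <= rho1 then
           xt = x + s /\
           D' = (if eta2 < rho1 then Order.min Dmax (r2 * D) else D)
         else
           let a0 := eminr (Gs x (nrm s)) (enorm s) in
           let replace := mk 0 - mk (a0 *: nrm s) < a0 / (2 * enorm s) * (mk 0 - mk s) in
           let s2 := if replace then sC else s in
           let a := if replace then eminr (Gs x (nrm sC)) (enorm sC) else a0 in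
           let rho2 := (psi x - psi (x + a *: nrm s2)) / (mk 0 - mk (a *: nrm s2)) in
           D' = (if rho2 < eta1 then r1 * D
                 else if eta2 < rho2 then Order.min Dmax (r2 * D) else D) /\
           xt = (if eta <= rho2 then x + a *: nrm s2 else x))
      &
        trunc_loop psi m S T eps xt c x' c'].

End Defs.

From HB Require Import structures.
From mathcomp Require Import all_boot all_order all_algebra.
From mathcomp Require Import all_classical all_reals all_analysis.
From mathcomp Require Import ring lra.

(* Each pass through the truncation loop in layer i moves the point by at most
   kappa * eps_(c_i) and then increments the counter c_i.  Hence the distance
   travelled during truncation is dominated by the increase of the potential
   sum_(i < m) sum_(j < c_i) eps_j, which never exceeds m * sum_j eps_j; the
   displacements therefore telescope to the first bound.  The iterates, and
   with them the points before truncation, stay in a fixed ball, on which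
   psi = f + phi is Lipschitz: f by the mean value theorem with a gradient
   bounded by compactness, phi because a convex function bounded above on a
   ball is Lipschitz on the concentric ball of half the radius.  So the
   psi-differences are dominated by the summable displacements. *)

Set Implicit Arguments.
Unset Strict Implicit.
Unset Printing Implicit Defensive.

Import Order.TTheory GRing.Theory Num.Theory.
Import numFieldNormedType.Exports.
Local Open Scope classical_set_scope.
Local Open Scope ring_scope.

Section Euclidean.
Variables (R : realType) (n : nat).
Notation vec := 'rV[R]_n.
Implicit Types u v w : vec.

Lemma dotC u v : dot u v = dot v u.
Proof. by apply: eq_bigr => i _; rewrite mulrC. Qed.

Lemma dotDl u v w : dot (u + v) w = dot u w + dot v w.
Proof. by rewrite /dot -big_split; apply: eq_bigr => i _; rewrite !mxE mulrDl. Qed.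

Lemma dotZl a u v : dot (a *: u) v = a * dot u v.
Proof. by rewrite /dot mulr_sumr; apply: eq_bigr => i _; rewrite !mxE mulrA. Qed.

Lemma dotBl u v w : dot (u - v) w = dot u w - dot v w.
Proof. by rewrite dotDl -scaleN1r dotZl mulN1r. Qed.

Lemma dotDr u v w : dot w (u + v) = dot w u + dot w v.
Proof. by rewrite dotC dotDl !(dotC w). Qed.

Lemma dotZr a u v : dot v (a *: u) = a * dot v u.
Proof. by rewrite dotC dotZl dotC. Qed.

Lemma dotBr u v w : dot w (u - v) = dot w u - dot w v.
Proof. by rewrite dotC dotBl !(dotC w). Qed.

Lemma dot0l u : dot 0 u = 0.
Proof. by rewrite -(scale0r 0) dotZl mul0r. Qed.

Lemma dot0r u : dot u 0 = 0.
Proof. by rewrite dotC dot0l. Qed.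

Lemma dot_ge0 v : 0 <= dot v v.
Proof. by rewrite sumr_ge0 // => i _; rewrite -expr2 sqr_ge0. Qed.

Lemma dot_eq0 v : dot v v = 0 -> v = 0.
Proof.
move=> v0; apply/rowP => i; rewrite mxE.
have sq_ge0 j : 0 <= v ord0 j * v ord0 j by rewrite -expr2 sqr_ge0.
have /eqP := psumr_eq0P (P := xpredT) (fun j _ => sq_ge0 j) v0 (i := i) isT.
by rewrite mulf_eq0 orbb ord1 => /eqP.
Qed.

Lemma enorm_ge0 v : 0 <= enorm v.
Proof. exact: sqrtr_ge0. Qed.

Lemma enorm_sqr v : enorm v ^+ 2 = dot v v.
Proof. by rewrite sqr_sqrtr // dot_ge0. Qed.

Lemma enorm0 : enorm (0 : vec) = 0.
Proof. by rewrite /enorm dot0l sqrtr0. Qed.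

Lemma enorm_eq0 v : enorm v = 0 -> v = 0.
Proof.
move=> /eqP; rewrite sqrtr_eq0 => v_le0; apply: dot_eq0.
by apply/eqP; rewrite eq_le v_le0 dot_ge0.
Qed.

Lemma enorm_gt0 v : v != 0 -> 0 < enorm v.
Proof. by move=> v_neq0; rewrite lt_def enorm_ge0 andbT; apply: contra_neqN v_neq0 => /eqP/enorm_eq0. Qed.

Lemma enormZ a v : enorm (a *: v) = `|a| * enorm v.
Proof. by rewrite /enorm dotZl dotZr mulrA -expr2 sqrtrM ?sqr_ge0 // sqrtr_sqr. Qed.

Lemma enormN v : enorm (- v) = enorm v.
Proof. by rewrite -scaleN1r enormZ normrN normr1 mul1r. Qed.

Lemma enormB v w : enorm (v - w) = enorm (w - v).
Proof. by rewrite -enormN opprB. Qed.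

Lemma ler_normr_dot u v : `|dot u v| <= enorm u * enorm v.
Proof.
have [v0|v_neq0] := eqVneq (dot v v) 0.
  by rewrite (dot_eq0 v0) dot0r normr0 mulr_ge0 ?enorm_ge0.
set a := dot v v; set b := dot u v.
have a_gt0 : 0 < a by rewrite lt_def v_neq0 dot_ge0.
(* 0 <= |a u - b v|^2 = a (a |u|^2 - b^2) with a = |v|^2 and b = <u, v> *)
have := dot_ge0 (a *: u - b *: v).
rewrite !(dotBl, dotBr, dotZl, dotZr) -/a -/b (dotC v u) -/b => sqr_ge0_auv.
have b2_le : b ^+ 2 <= dot u u * a.
  have : 0 <= a * (a * dot u u - b ^+ 2) by nra.
  by rewrite pmulr_rge0 // subr_ge0 mulrC.
rewrite -ler_sqr ?nnegrE ?mulr_ge0 ?enorm_ge0 //.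
by rewrite real_normK ?num_real // exprMn !enorm_sqr.
Qed.

Lemma ler_enormD u v : enorm (u + v) <= enorm u + enorm v.
Proof.
rewrite -ler_sqr ?nnegrE ?addr_ge0 ?enorm_ge0 //.
rewrite enorm_sqr !(dotDl, dotDr) sqrrD !enorm_sqr (dotC v u).
have := ler_normr_dot u v; have := ler_norm (dot u v); nra.
Qed.

Lemma ler_coord_enorm v i : `|v ord0 i| <= enorm v.
Proof.
rewrite -sqrtr_sqr ler_sqrt ?dot_ge0 // /dot (bigD1 i) //= expr2 lerDl.
by rewrite sumr_ge0 // => j _; rewrite -expr2 sqr_ge0.
Qed.

Lemma ler_coord_mxnorm v i : `|v ord0 i| <= `|v|.
Proof.
rewrite [leRHS]/Num.norm /= mx_normrE.
by apply/bigmax_geP; right; exists (ord0, i).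
Qed.

Lemma ler_mxnorm_enorm v : `|v| <= enorm v.
Proof.
rewrite [leLHS]/Num.norm /= mx_normrE.
apply: bigmax_le; first exact: enorm_ge0.
by move=> [i j] _ /=; rewrite ord1; exact: ler_coord_enorm.
Qed.

Lemma ler_enorm_mxnorm v : enorm v <= Num.sqrt n%:R * `|v|.
Proof.
rewrite -(ger0_norm (normr_ge0 v)) -sqrtr_sqr -sqrtrM // ler_sqrt; last first.
  by rewrite mulr_ge0 // sqr_ge0.
apply: (@le_trans _ _ (\sum_(i < n) `|v| ^+ 2)); last first.
  by rewrite sumr_const card_ord mulr_natl.
apply: ler_sum => i _; rewrite -expr2 -real_normK ?num_real //.
by rewrite ler_sqr ?nnegrE ?normr_ge0 // ler_coord_mxnorm.
Qed.

End Euclidean.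

Section Lipschitz.
Variables (R : realType) (n : nat).
Notation vec := 'rV[R]_n.

Definition lipschitz_on_ball (h : vec -> R) (M L : R) :=
  forall y z, enorm y <= M -> enorm z <= M -> `|h z - h y| <= L * enorm (z - y).

Definition locally_lipschitz (h : vec -> R) :=
  forall M, 0 < M -> exists2 L, 0 <= L & lipschitz_on_ball h M L.

Lemma locally_lipschitzD (g h : vec -> R) :
  locally_lipschitz g -> locally_lipschitz h -> locally_lipschitz (fun y => g y + h y).
Proof.
move=> g_lip h_lip M M_gt0.
have [Lg Lg_ge0 g_le] := g_lip M M_gt0; have [Lh Lh_ge0 h_le] := h_lip M M_gt0.
exists (Lg + Lh) => [|y z y_le z_le]; first exact: addr_ge0.
rewrite (_ : _ - _ = (g z - g y) + (h z - h y)); last by ring.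
by rewrite mulrDl (le_trans (ler_normD _ _)) // lerD ?g_le ?h_le.
Qed.

End Lipschitz.

Section ConvexLipschitz.
Variables (R : realType) (n : nat) (phi : 'rV[R]_n -> R).
Notation vec := 'rV[R]_n.
Hypothesis phi_cvx : convex_fun phi.

Lemma convex_jensen k (lam : 'I_k -> R) (z : 'I_k -> vec) :
  (forall j, 0 <= lam j) -> \sum_j lam j = 1 ->
  phi (\sum_j lam j *: z j) <= \sum_j lam j * phi (z j).
Proof.
elim: k lam z => [|k IH] lam z lam_ge0.
  by rewrite big_ord0 => /eqP; rewrite eq_sym oner_eq0.
rewrite !big_ord_recl => lam_sum.
have tail_ge0 : 0 <= \sum_(j < k) lam (lift ord0 j) by apply: sumr_ge0 => j _.
have lam0_le1 : lam ord0 <= 1 by lra.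
have [lam0_eq1 | lam0_neq1] := eqVneq (lam ord0) 1.
  have tail_eq0 j : lam (lift ord0 j) = 0.
    by apply: (psumr_eq0P (P := xpredT) (fun j _ => lam_ge0 (lift ord0 j))); first lra.
  rewrite big1 ?[in X in _ <= X]big1 ?lam0_eq1 ?scale1r ?mul1r ?addr0 // => j _.
    by rewrite tail_eq0 mul0r.
  by rewrite tail_eq0 scale0r.
have t_gt0 : 0 < 1 - lam ord0 by rewrite subr_gt0 lt_neqAle lam0_neq1 lam0_le1.
pose mu (j : 'I_k) := lam (lift ord0 j) / (1 - lam ord0).
have mu_sum : \sum_j mu j = 1.
  by rewrite -mulr_suml (_ : \sum_(j < k) _ = 1 - lam ord0) ?divff ?gt_eqF //; lra.
have -> : \sum_(j < k) lam (lift ord0 j) *: z (lift ord0 j) =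
    (1 - lam ord0) *: \sum_j mu j *: z (lift ord0 j).
  by rewrite scaler_sumr; apply: eq_bigr => j _; rewrite scalerA /mu mulrC divfK ?gt_eqF.
have -> : \sum_(j < k) lam (lift ord0 j) * phi (z (lift ord0 j)) =
    (1 - lam ord0) * \sum_j mu j * phi (z (lift ord0 j)).
  rewrite mulr_sumr; apply: eq_bigr => j _.
  by rewrite mulrA /mu (mulrC (1 - _)) divfK ?gt_eqF.
have lam0_01 : 0 <= lam ord0 <= 1 by rewrite lam_ge0 lam0_le1.
apply: le_trans (@phi_cvx _ _ _ lam0_01) _.
rewrite lerD2l ler_wpM2l ?(ltW t_gt0) // IH // => j.
by rewrite divr_ge0 ?(ltW t_gt0).
Qed.

Lemma convex_le_on_axis (a t : R) j : 0 < a -> `|t| <= a ->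
  phi (t *: 'e_j) <= `|phi (a *: 'e_j)| + `|phi ((- a) *: 'e_j)|.
Proof.
move=> a_gt0; rewrite ler_norml => /andP[t_ge t_le].
pose s := (1 + t / a) / 2.
have s01 : 0 <= s <= 1.
  have /andP[] : -1 <= t / a <= 1 by rewrite ler_pdivlMr // ler_pdivrMr // mulN1r mul1r t_ge.
  by rewrite /s; lra.
have -> : t *: 'e_j = s *: (a *: 'e_j) + (1 - s) *: ((- a) *: 'e_j) :> vec.
  by rewrite !scalerA -scalerDl /s; congr (_ *: _); field; rewrite gt_eqF.
apply: le_trans (@phi_cvx _ _ _ s01) _.
have := ler_norm (phi (a *: 'e_j)); have := ler_norm (phi ((- a) *: 'e_j)).
have := normr_ge0 (phi (a *: 'e_j)); have := normr_ge0 (phi ((- a) *: 'e_j)).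
move: s01 => /andP[? ?]; nra.
Qed.

Lemma convex_bounded_above r : 0 < r -> exists U, forall y, enorm y <= r -> phi y <= U.
Proof.
move=> r_gt0; have [n0|n_gt0] := posnP n.
  exists (phi 0) => y _; suff -> : y = 0 by [].
  by apply/rowP => i; have := ltn_ord i; rewrite {2}n0.
pose N : R := n%:R; have N_gt0 : 0 < N by rewrite ltr0n.
pose B j := `|phi ((N * r) *: 'e_j)| + `|phi ((- (N * r)) *: 'e_j)|.
exists (\sum_(j < n) B j) => y y_le.
(* y is the barycenter of the points N y_j e_j, each lying on a coordinate axis *)
have -> : y = \sum_(j < n) N^-1 *: ((N * y ord0 j) *: 'e_j).
  rewrite {1}(row_sum_delta y); apply: eq_bigr => j _.
  by rewrite scalerA mulrA mulVf ?mul1r ?gt_eqF.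
apply: le_trans (@convex_jensen n (fun=> N^-1) (fun j => (N * y ord0 j) *: 'e_j) _ _) _.
- by move=> j; rewrite invr_ge0 ltW.
- by rewrite sumr_const card_ord -mulr_natr mulVf ?gt_eqF.
apply: ler_sum => j _.
have B_ge0 : 0 <= B j by rewrite addr_ge0.
have Ninv_le1 : N^-1 <= 1 by rewrite invf_le1 // ler1n.
apply: (@le_trans _ _ (N^-1 * B j)); last by rewrite ler_piMl.
rewrite ler_wpM2l ?invr_ge0 ?(ltW N_gt0) // convex_le_on_axis ?mulr_gt0 //.
by rewrite normrM gtr0_norm // ler_wpM2l ?(ltW N_gt0) // (le_trans (ler_coord_enorm _ _)).
Qed.

Lemma convex_bounded_below M U : (forall y, enorm y <= M -> phi y <= U) ->
  forall y, enorm y <= M -> 2 * phi 0 - U <= phi y.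
Proof.
move=> phi_le y y_le.
have half01 : 0 <= (2^-1 : R) <= 1 by apply/andP; split; lra.
have := @phi_cvx y (- y) _ half01.
have -> : 2^-1 *: y + (1 - 2^-1) *: - y = 0 by apply/rowP => j; rewrite !mxE; field.
by have := phi_le (- y); rewrite enormN => /(_ y_le); lra.
Qed.

Lemma convex_slope_le M L0 U : 0 < M ->
  (forall y, enorm y <= 2 * M -> L0 <= phi y <= U) ->
  forall y z, enorm y <= M -> enorm z <= M ->
  phi z - phi y <= (U - L0) / M * enorm (z - y).
Proof.
move=> M_gt0 phi_bnd y z y_le z_le.
have [->|z_neq_y] := eqVneq z y; first by rewrite !subrr enorm0 mulr0.
set e := enorm (z - y).
have e_gt0 : 0 < e by rewrite enorm_gt0 // subr_eq0.
(* extend the segment from y through z by length M to a point w of the ball of radius 2 M *)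
pose w := z + (M / e) *: (z - y).
have w_le : enorm w <= 2 * M.
  apply: le_trans (ler_enormD _ _) _.
  by rewrite enormZ ger0_norm ?divr_ge0 ?(ltW M_gt0) ?(ltW e_gt0) // divfK ?gt_eqF //; lra.
pose t := e / (e + M).
have t_gt0 : 0 < t by rewrite divr_gt0 // addr_gt0.
have t01 : 0 <= t <= 1 by rewrite ltW //= ler_pdivrMr ?addr_gt0 //; lra.
have z_eq : z = t *: w + (1 - t) *: y.
  apply/rowP => j; rewrite /w /t !mxE.
  by field; rewrite !gt_eqF ?addr_gt0.
have := @phi_cvx w y t t01; rewrite -z_eq.
have /andP[L0_le_y _] := phi_bnd y (le_trans y_le (ler_peMl (ltW M_gt0) (ler1n _ 2))).
have /andP[L0_le_w w_le_U] := phi_bnd w w_le.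
have t_le : t <= e / M by rewrite ler_pdivlMr // /t mulrAC ler_pdivrMr ?addr_gt0 //; nra.
move=> phi_z_le; apply: (@le_trans _ _ (t * (U - L0))); first nra.
by rewrite -mulrA (mulrC t) ler_wpM2l ?subr_ge0 ?(le_trans L0_le_w w_le_U) // mulrC.
Qed.

Lemma convex_locally_lipschitz : locally_lipschitz phi.
Proof.
move=> M M_gt0.
have [U phi_le] := convex_bounded_above (mulr_gt0 (ltr0n _ 2) M_gt0).
pose L0 := 2 * phi 0 - U.
have phi_bnd y : enorm y <= 2 * M -> L0 <= phi y <= U.
  by move=> y_le; rewrite phi_le // andbT (convex_bounded_below phi_le).
have L0_le_U : L0 <= U.
  have : enorm (0 : vec) <= 2 * M by rewrite enorm0 mulr_ge0 ?ltW.
  by move=> /phi_bnd /andP[] /le_trans; apply.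
exists ((U - L0) / M) => [|y z y_le z_le]; first by rewrite divr_ge0 ?subr_ge0 ?(ltW M_gt0).
rewrite ler_norml lerNl opprB {1}enormB.
by rewrite !(convex_slope_le M_gt0 phi_bnd).
Qed.

End ConvexLipschitz.

Section SmoothLipschitz.
Variables (R : realType) (n : nat).
Notation vec := 'rV[R]_n.

Lemma continuous_bounded_on_ball (g : vec -> vec) : continuous g ->
  forall M, 0 < M -> exists2 G, 0 <= G & forall p, enorm p <= M -> enorm (g p) <= G.
Proof.
move=> g_cont M M_gt0.
pose A := closed_ball (0 : vec) M.
have inA p : A p = (`|p| <= M) by rewrite /A closed_ballE // /closed_ball_ /= sub0r normrN.
have A_compact : compact A.
  apply: bounded_closed_compact; last exact: closed_ball_closed.
  exists M; split; first exact: num_real.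
  by move=> B M_lt p; rewrite inA => /le_trans; apply; exact: ltW.
have [G0 [_ G0_bnd]] := compact_bounded (continuous_compact (continuous_subspaceT g_cont) A_compact).
have G1 : G0 < `|G0| + 1 by rewrite (le_lt_trans (ler_norm G0)) // ltrDl.
exists (Num.sqrt n%:R * (`|G0| + 1)) => [|p p_le]; first by rewrite mulr_ge0 ?sqrtr_ge0 ?addr_ge0.
apply: le_trans (ler_enorm_mxnorm _) _.
rewrite ler_wpM2l ?sqrtr_ge0 //; apply: (G0_bnd _ G1); exists p => //.
by rewrite inA (le_trans (ler_mxnorm_enorm p)).
Qed.

Lemma dnbhs0_scaler (P : vec -> Prop) v : v != 0 ->
  (\forall w \near (0 : vec)^', P w) -> \forall h \near (0 : R)^', P (h *: v).
Proof.
move=> v_neq0 P_near.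
have P_near' : nbhs (0 *: v) (fun w => w != 0 -> P w) by rewrite scale0r; exact: P_near.
have hv_near := @scalel_continuous R _ v 0 _ P_near'.
near=> h.
have h_neq0 : h != 0 by near: h; exact: nbhs_dnbhs_neq.
have : h *: v != 0 -> P (h *: v) by near: h; apply: cvg_within; exact: hv_near.
by apply; rewrite scaler_eq0 negb_or h_neq0.
Unshelve. all: by end_near.
Qed.

Variables (f : vec -> R) (gradf : vec -> vec).
Hypothesis f_grad : has_gradient f gradf.

Lemma has_gradient_cvg_dir p v :
  (fun h : R => h^-1 * (f (p + h *: v) - f p)) @ (0 : R)^' --> dot (gradf p) v.
Proof.
have [->|v_neq0] := eqVneq v 0.
  rewrite dot0r (_ : (fun h => _) = fun=> 0); first exact: cvg_cst.
  by apply: funext => h; rewrite scaler0 addr0 subrr mulr0.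
have v_gt0 := enorm_gt0 v_neq0.
apply/cvgrPdist_lt => e e_gt0.
have := f_grad p; move/cvgrPdist_lt => /(_ (e / enorm v) (divr_gt0 e_gt0 v_gt0)) near_p.
have := dnbhs0_scaler v_neq0 near_p.
apply: filter_app; near=> h => /=.
have h_neq0 : h != 0 by near: h; exact: nbhs_dnbhs_neq.
set N := f (p + h *: v) - f p - h * dot (gradf p) v.
rewrite sub0r normrN dotZr -/N enormZ.
have -> : dot (gradf p) v - h^-1 * (f (p + h *: v) - f p) = - (N / h) by rewrite /N; field.
rewrite normrN !normrM !normfV normrM normr_id (ger0_norm (ltW v_gt0)) invfM mulrA.
by rewrite ltr_pM2r ?invr_gt0.
Unshelve. all: by end_near.
Qed.

Lemma is_derive_line y v t :
  is_derive t (1 : R) (fun s => f (y + s *: v)) (dot (gradf (y + t *: v)) v).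
Proof.
pose g s := f (y + s *: v).
have dq : (fun h : R => h^-1 *: ((g \o shift t) (h *: 1) - g t)) =
          (fun h : R => h^-1 * (f ((y + t *: v) + h *: v) - f (y + t *: v))).
  by apply: funext => h; rewrite /g /= [h *: 1]mulr1 scalerDl addrA (addrAC y).
have cvg_dq := @has_gradient_cvg_dir (y + t *: v) v.
apply: DeriveDef; first by rewrite /derivable dq; apply: cvgP cvg_dq.
by rewrite /derive dq; apply: cvg_lim cvg_dq.
Qed.

Hypothesis gradf_cont : continuous gradf.

Lemma C1_locally_lipschitz : locally_lipschitz f.
Proof.
move=> M M_gt0.
have [G G_ge0 gradf_le] := continuous_bounded_on_ball gradf_cont M_gt0.
exists G => // y z y_le z_le.
set v := z - y; pose g t := f (y + t *: v).
have g_der t : derivable g t 1 by apply: ex_derive; exact: is_derive_line.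
have g_cont : {within `[0, 1], continuous g}.
  apply: continuous_subspaceT => t.
  by apply: differentiable_continuous; apply/derivable1_diffP.
have [c c01 g_mvt] := MVT ltr01 (fun t _ => is_derive_line y v t) g_cont.
move: g_mvt; rewrite /g scale1r scale0r addr0 /v (addrC y) subrK subr0 mulr1 => ->.
apply: le_trans (ler_normr_dot _ _) _.
rewrite ler_wpM2r ?enorm_ge0 // gradf_le //.
have /andP[c_gt0 c_lt1] : 0 < c < 1 by move: c01; rewrite in_itv.
have -> : y + c *: (z - y) = (1 - c) *: y + c *: z by apply/rowP => j; rewrite !mxE; ring.
apply: le_trans (ler_enormD _ _) _.
rewrite !enormZ !ger0_norm ?subr_ge0 ?(ltW c_lt1) ?(ltW c_gt0) //.
nra.
Qed.

End SmoothLipschitz.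

Section Series.
Variable R : realType.

Lemma telescope_partial_le (a P : nat -> R) N :
  (forall k, a k <= P k.+1 - P k) -> \sum_(k < N) a k <= P N - P 0.
Proof.
move=> a_le; rewrite -(telescope_sumr (fun k => P k) (leq0n N)) big_mkord.
by apply: ler_sum => k _; exact: a_le.
Qed.

Lemma nneseries_le_of_partial_sums (a : nat -> R) C : (forall k, 0 <= a k) ->
  (forall N, \sum_(k < N) a k <= C) -> (\sum_(k <oo) (a k)%:E <= C%:E)%E.
Proof.
move=> a_ge0 partial_le.
apply: lime_le; first by apply: is_cvg_nneseries => k _ _; rewrite lee_fin.
by apply: nearW => N; rewrite big_mkord sumEFin lee_fin.
Qed.

Lemma nneseries_dominated_lty (a b : nat -> R) L C : 0 <= L -> (forall k, 0 <= a k) ->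
  (forall k, `|b k| <= L * a k) -> (\sum_(k <oo) (a k)%:E <= C%:E)%E ->
  (\sum_(k <oo) `|b k|%:E < +oo)%E.
Proof.
move=> L_ge0 a_ge0 b_le a_sum_le.
apply: (@le_lt_trans _ _ (L * C)%:E); last exact: ltry.
apply: (@le_trans _ _ (\sum_(k <oo) (L%:E * (a k)%:E))%E).
  by apply: lee_nneseries => [k _ _|k _]; rewrite ?lee_fin // -EFinM lee_fin.
by rewrite nneseriesZl ?EFinM ?lee_wpmul2l ?lee_fin // => k _; rewrite lee_fin.
Qed.

End Series.

Section Truncation.
Variables (R : realType) (n : nat).
Notation vec := 'rV[R]_n.

Definition trunc_potential (eps : nat -> R) (m : nat) (c : nat -> nat) : R :=
  \sum_(i < m) \sum_(j < c i) eps j.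

Lemma trunc_potential0 eps m : trunc_potential eps m (fun=> 0%N) = 0.
Proof. by rewrite /trunc_potential big1 // => i _; rewrite big_ord0. Qed.

Lemma trunc_potential_ge0 eps m c : (forall j, 0 <= eps j) -> 0 <= trunc_potential eps m c.
Proof. by move=> eps_ge0; do 2!apply: sumr_ge0 => ? _. Qed.

Lemma trunc_potential_incr eps m c i : (i < m)%N ->
  trunc_potential eps m (incr c i) = trunc_potential eps m c + eps (c i).
Proof.
move=> i_lt_m; rewrite addrC -[LHS](subrK (trunc_potential eps m c)); congr (_ + _).
rewrite -sumrB.
rewrite (eq_bigr (fun j : 'I_m => if j == i :> nat then eps (c i) else 0)).
  by rewrite -big_mkcond /= (big_ord1_eq _ (fun=> eps (c i))) i_lt_m.
move=> j _; rewrite /incr; case: eqP => [->|_]; last by rewrite subrr.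
by rewrite big_ord_recr /= addrAC subrr add0r.
Qed.

Lemma trunc_potential_le_series eps m c : (forall j, 0 <= eps j) ->
  (\sum_(j <oo) (eps j)%:E < +oo)%E ->
  trunc_potential eps m c <= m%:R * fine (\sum_(j <oo) (eps j)%:E)%E.
Proof.
move=> eps_ge0 eps_fin.
have sum_fin : (\sum_(j <oo) (eps j)%:E)%E \is a fin_num.
  by rewrite ge0_fin_numE // nneseries_ge0 // => j _ _; rewrite lee_fin.
apply: (@le_trans _ _ (\sum_(i < m) fine (\sum_(j <oo) (eps j)%:E)%E)).
  apply: ler_sum => i _; rewrite -lee_fin fineK //.
  have := @nneseries_lim_ge R (fun j => (eps j)%:E) xpredT 0%N (c i).
  by rewrite big_mkord sumEFin; apply => j _ _; rewrite lee_fin.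
by rewrite sumr_const card_ord mulr_natl.
Qed.

Variables (psi : vec -> R) (m : nat) (S : nat -> set vec) (delta : \bar R)
  (kappa : R) (T : vec -> R -> vec) (eps : nat -> R).
Hypotheses (trunc : truncatable psi m S delta kappa T)
  (eps_gt0 : forall s, 0 < eps s) (eps_le : forall s, ((eps s)%:E <= delta)%E).

Lemma trunc_loop_displacement x c x' c' : trunc_loop psi m S T eps x c x' c' ->
  enorm (x' - x) <= kappa * (trunc_potential eps m c' - trunc_potential eps m c).
Proof.
have [_ _ _ Gamma_Sm T_spec] := trunc.
elim=> {x c x' c'} [x c i _ _ | x c i x' c' [i_le [Si_x Si1_x]] Gamma_lt _ IH].
  by rewrite !subrr enorm0 mulr0.
have i_lt_m : (i < m)%N.
  rewrite ltn_neqAle i_le andbT; apply/negP => /eqP i_eq_m.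
  move: Si_x; rewrite /layerS i_eq_m leqnn => /Gamma_Sm delta_le.
  by have := le_lt_trans (le_trans (eps_le (c i)) delta_le) Gamma_lt; rewrite ltxx.
move: Si_x Si1_x; rewrite /layerS i_le i_lt_m => Si_x Si1_x.
have [_ T_moved] := T_spec (eps (c i)) i x (eps_gt0 _) (eps_le _) i_lt_m Si_x Si1_x.
have [_ _ T_dist] := T_moved Gamma_lt.
set y := T x (eps (c i)) in IH T_dist *.
rewrite (trunc_potential_incr _ _ i_lt_m) in IH.
have := ler_enormD (x' - y) (y - x); rewrite addrA subrK.
lra.
Qed.

Lemma alg_step_displacement u d Gs ell eta eta1 eta2 r1 r2 Dmax gam1 gam2
    x D c xt x' D' c' :
  alg_step psi u d Gs m S T eps ell eta eta1 eta2 r1 r2 Dmax gam1 gam2 x D c xt x' D' c' ->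
  enorm (x' - xt) <= kappa * (trunc_potential eps m c' - trunc_potential eps m c).
Proof.
rewrite /alg_step; case: ifP => _ => [[-> -> _ ->]|[B [aC [s [_ _ _ loop]]]]].
  by rewrite !subrr enorm0 mulr0.
exact: trunc_loop_displacement loop.
Qed.

End Truncation.

Unset Implicit Arguments.

Theorem lemma4p7 (R : realType) (n : nat)
  (f phi : 'rV[R]_n -> R) (gradf : 'rV[R]_n -> 'rV[R]_n)
  (u : 'rV[R]_n -> R) (d : 'rV[R]_n -> 'rV[R]_n)
  (Gs : 'rV[R]_n -> 'rV[R]_n -> \bar R)
  (m : nat) (S : nat -> set 'rV[R]_n) (delta : \bar R) (kappa : R)
  (T : 'rV[R]_n -> R -> 'rV[R]_n)
  (eta eta1 eta2 r1 r2 Dmax gam1 gam2 : R)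
  (eps : nat -> R) (ell : R -> R)
  (x0 : 'rV[R]_n) (D0 : R)
  (x xt : nat -> 'rV[R]_n) (D : nat -> R) (c : nat -> nat -> nat) :
  let psi := fun y => f y + phi y in
  (* f is C^1 with gradient gradf; phi convex *)
  has_gradient f gradf -> continuous gradf -> convex_fun phi ->
  (* pseudo-gradient and stepsize safeguard *)
  pseudo_gradient gradf phi psi u d ->
  (forall y e, (0 < Gs y e)%E) ->
  (* psi can be truncated *)
  truncatable psi m S delta kappa T ->
  (* parameters *)
  0 < eta -> eta < eta1 -> eta1 < eta2 -> eta2 < 1 ->
  0 < r1 -> r1 < 1 -> 1 < r2 -> 0 < Dmax -> 0 < gam1 -> 0 < gam2 ->
  (forall s, 0 < eps s) -> (forall s, eps s.+1 < eps s) ->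
  (\sum_(s <oo) (eps s)%:E < +oo)%E ->
  (forall s, ((eps s)%:E <= delta)%E) ->
  (forall a b, 0 < a -> a <= b -> ell b <= ell a) ->
  (forall a, 0 < a -> 0 <= ell a <= 2^-1) ->
  ell t @[t --> 0^'+] --> 0 ->
  0 < D0 ->
  (* the run of the algorithm *)
  x 0%N = x0 -> D 0%N = D0 -> c 0%N = (fun _ => 0%N) ->
  (forall k, alg_step psi u d Gs m S T eps ell eta eta1 eta2 r1 r2 Dmax gam1 gam2
               (x k) (D k) (c k) (xt k) (x k.+1) (D k.+1) (c k.+1)) ->
  (* bounded iterates *)
  (exists2 Rb : R, 0 < Rb & forall k, enorm (x k) < Rb) ->
  ((\sum_(k <oo) (enorm (x k.+1 - xt k))%:E
      <= (m%:R * kappa)%:E * \sum_(i <oo) (eps i)%:E)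
   /\ \sum_(i <oo) (eps i)%:E < +oo
   /\ \sum_(k <oo) `|psi (x k.+1) - psi (xt k)|%:E < +oo)%E.
Proof.
move=> psi f_grad gradf_cont phi_cvx _ _ trunc _ _ _ _ _ _ _ _ _ _ eps_gt0 _ eps_fin eps_le
  _ _ _ _ _ _ c0 run [Rb Rb_gt0 x_lt].
have kappa_gt0 : 0 < kappa by case: trunc => _ _ [].
have eps_ge0 j : 0 <= eps j := ltW (eps_gt0 j).
set E := fine (\sum_(i <oo) (eps i)%:E)%E.
have eps_sum : (\sum_(i <oo) (eps i)%:E)%E = E%:E.
  by rewrite /E fineK // ge0_fin_numE // nneseries_ge0 // => j _ _; rewrite lee_fin.
pose C := m%:R * kappa * E.
pose P k := kappa * trunc_potential eps m (c k).
have P_ge0 k : 0 <= P k by rewrite /P mulr_ge0 ?(ltW kappa_gt0) ?trunc_potential_ge0.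
have P_le k : P k <= C.
  by rewrite /P /C (mulrC _ kappa) -mulrA ler_wpM2l ?(ltW kappa_gt0) ?trunc_potential_le_series.
have jump k : enorm (x k.+1 - xt k) <= P k.+1 - P k.
  by rewrite -mulrBr (alg_step_displacement trunc eps_gt0 eps_le (run k)).
have jumps_le : (\sum_(k <oo) (enorm (x k.+1 - xt k))%:E <= C%:E)%E.
  apply: nneseries_le_of_partial_sums => [k|N]; first exact: enorm_ge0.
  by rewrite (le_trans (telescope_partial_le _ jump)) // {2}/P c0 trunc_potential0 mulr0 subr0.
split; first by rewrite eps_sum -EFinM.
split=> //.
have C_ge0 : 0 <= C := le_trans (P_ge0 0%N) (P_le 0%N).
pose M := Rb + C.
have M_gt0 : 0 < M by rewrite /M ltr_pwDl.
have x_le k : enorm (x k.+1) <= M by rewrite /M (le_trans (ltW (x_lt _))) // lerDl.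
have xt_le k : enorm (xt k) <= M.
  have := ler_enormD (x k.+1) (xt k - x k.+1); rewrite addrC subrK enormB.
  by have := jump k; have := P_le k.+1; have := P_ge0 k; have := x_lt k.+1; rewrite /M; lra.
have [L L_ge0 psi_lip] := locally_lipschitzD (C1_locally_lipschitz f_grad gradf_cont)
  (convex_locally_lipschitz phi_cvx) M_gt0.
apply: (nneseries_dominated_lty L_ge0 _ _ jumps_le) => k; first exact: enorm_ge0.
exact: psi_lip (xt_le k) (x_le k).
Qed.
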